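(* Let $n\ge r\ge1$ and define $P^{\mathrm{RC}}_{n,r}\in\mathbb{F}[x_1,\ldots,x_n,y_1,\ldots,y_r,t_0,t_1,\ldots,t_n]$ by $$P^{\mathrm{RC}}_{n,r}(x,y,t)=\sum_{j=1}^r y_j t_0^j\prod_{k=1}^n(1+x_kt_k^j).$$ Let $N=2^n$ and identify each $i\in[N]$ with the subset $S_i\subseteq[n]$ such that $i-1=\sum_{k\in S_i}2^{k-1}$. Then for every $i\in[N]$, after substituting $t_0=t$ and $t_k=t^{2^{k-1}}$ for $k=1,\ldots,n$ (with $t$ a new variable), the coefficient of the monomial $\prod_{k\in S_i}x_k$ in $P^{\mathrm{RC}}_{n,r}$ (viewed as a multilinear polynomial in $x$) equals $\sum_{j=1}^r y_jt^{ij}$. *)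

From HB Require Import structures.
From mathcomp Require Import all_boot all_order all_algebra.
From mathcomp Require Import mpoly.
Unset Printing Implicit Defensive.
Import GRing.Theory.
Local Open Scope ring_scope.

(* Variables of F[x_1..x_n, y_1..y_r, t_0..t_n] are indexed (0-based) by
   'I_(n + r + n.+1): first x_1..x_n, then y_1..y_r, then t_0..t_n. *)
Definition xvar (n r : nat) (k : 'I_n) : 'I_(n + r + n.+1) :=
  lshift n.+1 (lshift r k).
Definition yvar (n r : nat) (j : 'I_r) : 'I_(n + r + n.+1) :=
  lshift n.+1 (rshift n j).
Definition tvar (n r : nat) (k : 'I_n.+1) : 'I_(n + r + n.+1) :=
  rshift (n + r) k.

Definition PRC (F : fieldType) (n r : nat) : {mpoly F[n + r + n.+1]} :=
  \sum_(j < r) 'X_(yvar n r j) * 'X_(tvar n r ord0) ^+ j.+1 *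
    \prod_(k < n) (1 + 'X_(xvar n r k) * 'X_(tvar n r (lift ord0 k)) ^+ j.+1).

(* Target ring: polynomials in x_1..x_n with coefficients in F[y_1..y_r, t];
   in F[y, t] the variable y_j is index j (0-based) and t is index r. *)
Definition yt_y (F : fieldType) (r : nat) (j : 'I_r) : {mpoly F[r.+1]} :=
  'X_(widen_ord (leqnSn r) j).
Definition yt_t (F : fieldType) (r : nat) : {mpoly F[r.+1]} := 'X_(ord_max).

Definition subst_val (F : fieldType) (n r : nat) (v : 'I_(n + r + n.+1)) :
    {mpoly {mpoly F[r.+1]}[n]} :=
  match split v with
  | inl a => match split a with
             | inl k => 'X_k
             | inr j => (yt_y F r j)%:MP
             end
  | inr k => (yt_t F r ^+ (if val k is k'.+1 then 2 ^ k' else 1))%:MP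
  end.

Definition PRC_subst (F : fieldType) (n r : nat) : {mpoly {mpoly F[r.+1]}[n]} :=
  mmap (fun c : F => (c%:MP)%:MP) (subst_val F n r) (PRC F n r).

(* The subset S_i of [n] for i in [N] (0-based: i' = i - 1, k' = k - 1):
   k' in S iff bit k' of i' is set; the monomial prod_{k in S_i} x_k. *)
Definition subset_monom (n : nat) (i : 'I_(2 ^ n)) : 'X_{1..n} :=
  [multinom (odd (i %/ 2 ^ k) : nat) | k < n].

From HB Require Import structures.
From mathcomp Require Import all_boot all_order all_algebra.
From mathcomp Require Import mpoly.
Import GRing.Theory.
Local Open Scope ring_scope.

(* After the substitution, the j-th summand of P^RC is
   y_j t^j prod_k (1 + x_k t^(j 2^(k-1))).  Expanding the product, the
   coefficient of prod_(k in S) x_k is y_j t^(j (1 + sum_(k in S) 2^(k-1))),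
   and 1 + sum_(k in S_i) 2^(k-1) = i is the binary expansion of i - 1. *)

Definition mnm_of_set {n} (A : {set 'I_n}) : 'X_{1..n} :=
  [multinom (k \in A : nat) | k < n].

Lemma mnm_of_setE n (A : {set 'I_n}) : mnm_of_set A = (\sum_(k in A) U_(k))%MM.
Proof.
apply/mnmP => k; rewrite mnmE mnm_sumE.
have [kA|kA] := boolP (k \in A).
  rewrite (bigD1 k) //= mnm1E eqxx big1 // => l /andP[_ lk].
  by rewrite mnm1E (negbTE lk).
by rewrite big1 // => l lA; rewrite mnm1E; case: eqP => // lk; rewrite -lk lA in kA.
Qed.

Lemma mnm_of_set_inj n : injective (@mnm_of_set n).
Proof.
move=> A B /mnmP eqAB; apply/setP => k.
by move: (eqAB k); rewrite !mnmE; case: (k \in A); case: (k \in B).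
Qed.

Section ProdOneAddX.
Variables (R : comNzRingType) (n : nat).

Lemma prod_1addXC (c : 'I_n -> R) :
  \prod_(k < n) (1 + 'X_k * (c k)%:MP) =
  \sum_(A : {set 'I_n}) (\prod_(k in A) c k)%:MP * 'X_[mnm_of_set A]
  :> {mpoly R[n]}.
Proof.
under eq_bigr do rewrite addrC.
rewrite bigA_distr; apply: eq_bigr => A _.
rewrite -big_mkcond /= big_split /= rmorph_prod mulrC mnm_of_setE.
by rewrite (big_morph _ (@mpolyXD n R) (@mpolyX0 n R)).
Qed.

Lemma mcoeff_prod_1addXC (c : 'I_n -> R) A :
  (\prod_(k < n) (1 + 'X_k * (c k)%:MP) : {mpoly R[n]})@_(mnm_of_set A)
  = \prod_(k in A) c k.
Proof.
rewrite prod_1addXC raddf_sum (bigD1 A) //= mcoeffCM mcoeffX eqxx mulr1.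
rewrite [X in _ + X]big1 ?addr0 // => B neqBA; rewrite mcoeffCM mcoeffX.
by case: eqP => [/mnm_of_set_inj eqBA|]; rewrite ?eqBA ?eqxx ?mulr0 in neqBA *.
Qed.

End ProdOneAddX.

Lemma binary_expansion n i :
  (i < 2 ^ n)%N -> (\sum_(k < n | odd (i %/ 2 ^ k)) 2 ^ k)%N = i.
Proof.
elim: n i => [|n IHn] i lt_i_2n.
  by rewrite big_ord0; move: lt_i_2n; rewrite expn0; case: i.
rewrite big_mkcond big_ord_recl /= expn0 divn1.
under eq_bigr => k _ do rewrite /bump /= add1n expnS divnMA.
rewrite -big_mkcond /= -big_distrr /= IHn; last by rewrite ltn_divLR // -expnSr.
by rewrite [in RHS](divn_eq i 2) modn2 mulnC addnC; case: (odd i).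
Qed.

Lemma split_lshift m n (i : 'I_m) : split (lshift n i) = inl i.
Proof. exact: (@unsplitK m n (inl i)). Qed.

Lemma split_rshift m n (i : 'I_n) : split (rshift m i) = inr i.
Proof. exact: (@unsplitK m n (inr i)). Qed.

Lemma PRC_substE (F : fieldType) (n r : nat) :
  PRC_subst F n r = \sum_(j < r) ((yt_y F r j * yt_t F r ^+ j.+1)%:MP *
    \prod_(k < n) (1 + 'X_k * (yt_t F r ^+ (j.+1 * 2 ^ k))%:MP)).
Proof.
rewrite /PRC_subst /PRC.
change (fun c : F => (c%:MP)%:MP)
  with ((@mpolyC n {mpoly F[r.+1]}) \o (@mpolyC r.+1 F)).
rewrite rmorph_sum; apply: eq_bigr => j _.
rewrite !rmorphM !rmorphXn rmorph_prod /= !mmapX !mmap1U /subst_val /=.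
rewrite !split_lshift !split_rshift /= expr1; congr (_ * _).
apply: eq_bigr => k _.
rewrite rmorphD rmorph1 rmorphM rmorphXn /= !mmapX !mmap1U /=.
by rewrite !split_lshift !split_rshift /= -rmorphXn -exprM mulnC.
Qed.

Lemma mcoeff_PRC_subst (F : fieldType) (n r : nat) (A : {set 'I_n}) :
  (PRC_subst F n r)@_(mnm_of_set A) = \sum_(j < r)
    yt_y F r j * yt_t F r ^+ ((\sum_(k in A) 2 ^ k).+1 * j.+1)%N.
Proof.
rewrite PRC_substE raddf_sum; apply: eq_bigr => j _.
rewrite /= mcoeffCM mcoeff_prod_1addXC.
rewrite -(big_morph _ (exprD (yt_t F r)) (expr0 (yt_t F r))) -big_distrr /=.
by rewrite -mulrA -exprD mulnC mulSn.
Qed.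

Lemma subset_monomE n (i : 'I_(2 ^ n)) :
  subset_monom n i = mnm_of_set [set k : 'I_n | odd (i %/ 2 ^ k)].
Proof. by apply/mnmP => k; rewrite !mnmE inE. Qed.

Theorem proposition4p2 (F : fieldType) (n r : nat) (hr : (1 <= r)%N)
    (hrn : (r <= n)%N) (i : 'I_(2 ^ n)) :
  (PRC_subst F n r)@_(subset_monom n i)
  = \sum_(j < r) yt_y F r j * yt_t F r ^+ ((val i).+1 * (val j).+1).
Proof.
rewrite subset_monomE mcoeff_PRC_subst.
suff -> : (\sum_(k in [set k : 'I_n | odd (i %/ 2 ^ k)]) 2 ^ k)%N = i by [].
by rewrite -[RHS](@binary_expansion n) //; apply: eq_bigl => k; rewrite inE.
Qed.
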